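(* There exists an absolute constant $C>0$ such that the following holds. Let $d\ge 1$ and let $H=(V,E)$ be a finite $d$-uniform hypergraph with $|E|\ge 1$, one (unknown) edge $e\in E$ of which is defective. Then there is an adaptive group testing algorithm that identifies $e$, for every possible choice of $e\in E$, using at most $$\log_2|E|+2\sqrt{d\log_2|E|}+C\,d$$ tests. In particular, if $d\ge \log_2|E|$ the number of tests is $O(d)$, and if $d=o(\log_2|E|)$ it is $\log_2|E|(1+o(1))$.
   Context: Group testing on a hypergraph: $H=(V,E)$ is a finite hypergraph (each edge is a subset of the finite vertex set $V$); $H$ is $d$-uniform if every edge has exactly $d$ vertices. Exactly one edge $e\in E$ is defective and unknown. A test is an arbitrary subset $S\subseteq V$; its outcome is positive if $S\cap e\neq\emptyset$ and negative otherwise. An adaptive algorithm may choose each test depending on the outcomes of all previous tests. The algorithm must output $e$ correctly for every $e\in E$; its number of tests is the worst case over $e\in E$. *)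

From mathcomp Require Import all_boot.
From Stdlib Require Import Reals.
Set Implicit Arguments. Unset Strict Implicit. Unset Printing Implicit Defensive.

(* An adaptive group testing algorithm on vertex set V, as a binary decision
   tree: an internal node performs the test S and continues in the first
   subtree if the outcome is positive and in the second if it is negative;
   a leaf outputs an edge (a subset of V). *)
Inductive gt_tree (V : finType) : Type :=
  | GTLeaf : {set V} -> gt_tree V
  | GTNode : {set V} -> gt_tree V -> gt_tree V -> gt_tree V.

Definition test_outcome (V : finType) (S e : {set V}) : bool := S :&: e != set0.

Fixpoint gt_output (V : finType) (t : gt_tree V) (e : {set V}) : {set V} :=
  match t with
  | GTLeaf o => o
  | GTNode T tp tn => if test_outcome T e then gt_output tp e else gt_output tn e
  end.

Fixpoint gt_ntests (V : finType) (t : gt_tree V) (e : {set V}) : nat :=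
  match t with
  | GTLeaf _ => 0
  | GTNode T tp tn =>
      (if test_outcome T e then gt_ntests tp e else gt_ntests tn e).+1
  end.

Definition uniform (V : finType) (E : {set {set V}}) (d : nat) : Prop :=
  forall e, e \in E -> #|e| = d.

Definition log2 (x : R) : R := (ln x / ln 2)%R.

(* Order the vertices and classify the edges by their minimal vertex; let w x
   be the number of edges whose minimal vertex is x.  Laying out the classes
   as disjoint intervals of lengths w x inside [0, 2|E|), a bisection over
   dyadic intervals isolates the class of the defective edge e once the
   intervals are shorter than w x, i.e. after about log2 (|E| / w x) + 3 tests
   on sets of the form {y | pos y < m}.  Removing x from the edges of its class
   leaves a (d-1)-uniform family of size w x to recurse on, so the costs
   telescope: 2 ^ (number of tests) <= |E| * 8 ^ d. *)

From mathcomp Require Import all_boot zify.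
From Stdlib Require Import Reals Lra.
(* Reals rebinds [^] on nat to [Nat.pow]; restore [expn]. *)
Import ssrnat.

Set Implicit Arguments.
Unset Strict Implicit.
Unset Printing Implicit Defensive.

Section AddVertex.
Variable V : finType.

Fixpoint gt_add (x : V) (t : gt_tree V) : gt_tree V :=
  match t with
  | GTLeaf o => GTLeaf (x |: o)
  | GTNode T tp tn => GTNode (T :\ x) (gt_add x tp) (gt_add x tn)
  end.

Lemma test_outcome_setD1 (T e : {set V}) x :
  test_outcome (T :\ x) e = test_outcome T (e :\ x).
Proof. by rewrite /test_outcome !setDE setIAC setIA. Qed.

Lemma gt_output_add x t e : gt_output (gt_add x t) e = x |: gt_output t (e :\ x).
Proof. by elim: t => //= T tp IHp tn IHn; rewrite test_outcome_setD1; case: ifP. Qed.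

Lemma gt_ntests_add x t e : gt_ntests (gt_add x t) e = gt_ntests t (e :\ x).
Proof. by elim: t => //= T tp IHp tn IHn; rewrite test_outcome_setD1 IHp IHn. Qed.

End AddVertex.

Section WeightedSearch.
Variables (V : finType) (F : {set {set V}}) (key : {set V} -> option V).
Variables (pos wt : V -> nat) (T : V -> gt_tree V).

(* Positions of distinct items differ by at least wt x + wt y, so a window of
   length at most wt x containing pos x contains no other item. *)
Hypothesis pos_sep : forall x y, x != y ->
  (pos x + wt x + wt y <= pos y) || (pos y + wt x + wt y <= pos x).
Hypothesis test_pos : forall e x m, e \in F -> key e = Some x ->
  test_outcome [set y | pos y < m] e = (pos x < m).

Definition cand lo h := [set x | (0 < wt x) && (lo <= pos x < lo + 2 ^ h)].

Fixpoint search lo h : gt_tree V :=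
  if #|cand lo h| <= 1 then
    if [pick x in cand lo h] is Some x then T x else GTLeaf set0
  else if h is h'.+1 then
    GTNode [set y | pos y < lo + 2 ^ h'] (search lo h') (search (lo + 2 ^ h') h')
  else GTLeaf set0.

Lemma cand_heavy_eq lo h x y :
  x \in cand lo h -> y \in cand lo h -> 2 ^ h <= wt x -> y = x.
Proof.
rewrite !inE => /andP[wx /andP[lx ux]] /andP[wy /andP[ly uy]] hw.
apply/eqP; apply: contraT; rewrite eq_sym => nxy.
by have /orP[] := pos_sep nxy; lia.
Qed.

Lemma cand_light lo h x :
  x \in cand lo h -> 1 < #|cand lo h| -> wt x < 2 ^ h.
Proof.
move=> xc; apply: contraLR; rewrite -!leqNgt => hw.
by apply/card_le1_eqP => y z yc zc; rewrite (cand_heavy_eq xc yc) ?(cand_heavy_eq xc zc).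
Qed.

Lemma pick_cand lo h x :
  x \in cand lo h -> #|cand lo h| <= 1 -> [pick y in cand lo h] = Some x.
Proof.
move=> xc /card_le1_eqP c1; case: pickP => [y yc|/(_ x)]; last by rewrite xc.
by rewrite (c1 y x).
Qed.

Lemma search_spec h lo e x : e \in F -> key e = Some x ->
  x \in cand lo h -> wt x < 2 ^ h.+1 ->
  gt_output (search lo h) e = gt_output (T x) e /\
  2 ^ gt_ntests (search lo h) e * wt x <= 2 ^ h.+1 * 2 ^ gt_ntests (T x) e.
Proof.
elim: h lo => [|h IH] lo eF ex xc wx; rewrite [search lo _]/=;
  (case: leqP => c1; first by rewrite (pick_cand xc c1) mulnC leq_mul2r ltnW ?orbT).
  by exfalso; have := cand_light xc c1; move: xc; rewrite inE => /andP[]; lia.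
have branch lo' : x \in cand lo' h ->
    gt_output (search lo' h) e = gt_output (T x) e /\
    2 ^ (gt_ntests (search lo' h) e).+1 * wt x <= 2 ^ h.+2 * 2 ^ gt_ntests (T x) e.
  move=> xc'; have [-> cost] := IH lo' eF ex xc' (cand_light xc c1); split=> //.
  by rewrite expnS -mulnA (expnS _ h.+1) -mulnA leq_mul2l.
move: xc; rewrite inE /= (test_pos _ eF ex) => /and3P[w0 lx ux].
case: ltnP => hx; apply: branch; rewrite inE w0 /=; first lia.
by rewrite expnS in ux; lia.
Qed.

End WeightedSearch.

Lemma disjoint_card_leq (T : finType) (A B C : {set T}) :
  [disjoint A & B] -> A :|: B \subset C -> #|A| + #|B| <= #|C|.
Proof. by move=> dAB sABC; rewrite -cardsUI (disjoint_setI0 dAB) cards0 addn0 subset_leq_card. Qed.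

Section MinVertex.
Variable V : finType.

Definition vidx (v : V) : nat := enum_rank v.

Lemma vidx_inj : injective vidx.
Proof. by move=> u v /val_inj /enum_rank_inj. Qed.

Definition vmin (e : {set V}) : option V :=
  [pick x in e | [forall y in e, vidx x <= vidx y]].

Lemma vminP e x : vmin e = Some x -> x \in e /\ forall y, y \in e -> vidx x <= vidx y.
Proof.
rewrite /vmin; case: pickP => // z /andP[ze /forall_inP zmin] [<-].
by split=> // y /zmin.
Qed.

Lemma vmin_exists e : e != set0 -> exists x, vmin e = Some x.
Proof.
case/set0Pn => x0 x0e; case: (arg_minnP vidx x0e) => x xe xmin.
rewrite /vmin; case: pickP => [z _|/(_ x)]; first by exists z.
by rewrite /= (xe : x \in e) (introT forall_inP xmin).
Qed.

End MinVertex.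

Section Codewords.
Variables (V : finType) (F : {set {set V}}).

(* [vidx] of the minimal vertex; the value for the empty edge is irrelevant. *)
Definition min_rank (e : {set V}) : nat := if vmin e is Some u then vidx u else 0.

Definition lower n := [set e in F | min_rank e < n].

Definition min_class x := [set e in F | vmin e == Some x].

Definition codeword v := 2 * #|lower (vidx v)| + #|min_class v|.

Lemma lower_class_le u : #|lower (vidx u)| + #|min_class u| <= #|lower (vidx u).+1|.
Proof.
apply: disjoint_card_leq.
  rewrite disjoints_subset; apply/subsetP => e; rewrite !inE /min_rank.
  by case/andP=> _; apply: contraTN => /andP[_ /eqP ->]; rewrite ltnn.
apply/subsetP => e; rewrite !inE /min_rank.
by case/orP => [/andP[-> /ltnW lt] | /andP[-> /eqP ->]]; rewrite /= ltnS.
Qed.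

Lemma lower_mono n m : n <= m -> #|lower n| <= #|lower m|.
Proof.
move=> nm; apply/subset_leq_card/subsetP => e.
by rewrite !inE => /andP[-> /leq_trans]; apply.
Qed.

Lemma lower_card n : #|lower n| <= #|F|.
Proof. by apply/subset_leq_card/subsetP => e; rewrite inE => /andP[]. Qed.

Lemma codeword_lt u v : vidx u < vidx v ->
  codeword u + #|min_class u| + #|min_class v| <= codeword v.
Proof. by move=> uv; have := lower_class_le u; have := lower_mono uv; rewrite /codeword; lia. Qed.

Lemma codeword_sep x y : x != y ->
  (codeword x + #|min_class x| + #|min_class y| <= codeword y) ||
  (codeword y + #|min_class x| + #|min_class y| <= codeword x).
Proof.
move=> nxy; have : vidx x != vidx y by apply: contra nxy => /eqP/vidx_inj ->.
by rewrite neq_ltn => /orP[/codeword_lt -> // | /codeword_lt]; rewrite addnAC => ->; rewrite orbT.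
Qed.

Lemma codeword_mono u v : vidx u <= vidx v -> codeword u <= codeword v.
Proof.
rewrite leq_eqVlt => /orP[/eqP/vidx_inj -> // | /codeword_lt]; lia.
Qed.

Lemma test_codeword e x m : vmin e = Some x ->
  test_outcome [set y | codeword y < m] e = (codeword x < m).
Proof.
case/vminP => xe xmin; rewrite /test_outcome; apply/set0Pn/idP => [[y]|xm].
  by rewrite !inE => /andP[ym /xmin/codeword_mono xy]; apply: leq_ltn_trans xy ym.
by exists x; rewrite !inE xm.
Qed.

Lemma codeword_bound x : codeword x + #|min_class x| <= 2 * #|F|.
Proof. by have := lower_class_le x; have := lower_card (vidx x).+1; rewrite /codeword; lia. Qed.

End Codewords.

Lemma min_vertex_search (V : finType) (F : {set {set V}}) (T : V -> gt_tree V) :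
  exists s, forall e x, e \in F -> vmin e = Some x ->
    gt_output s e = gt_output (T x) e /\
    2 ^ gt_ntests s e * #|min_class F x| <= 8 * #|F| * 2 ^ gt_ntests (T x) e.
Proof.
pose h := (trunc_log 2 (2 * #|F|)).+1.
exists (search (codeword F) (fun x => #|min_class F x|) T 0 h) => e x eF ex.
have w0 : 0 < #|min_class F x| by apply/card_gt0P; exists e; rewrite inE eF ex eqxx.
have /andP[lb ub] : 2 ^ h.-1 <= 2 * #|F| < 2 ^ h.
  by apply: trunc_log_bounds; rewrite // muln_gt0 /=; apply/card_gt0P; exists e.
have bx := codeword_bound F x.
have xc : x \in cand (codeword F) (fun x => #|min_class F x|) 0 h.
  by rewrite inE w0 /=; lia.
have wx : #|min_class F x| < 2 ^ h.+1 by rewrite expnS; lia.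
have [-> cost] := search_spec T (codeword_sep F)
  (fun e x m _ => @test_codeword V F e x m) eF ex xc wx.
split=> //; apply: leq_trans cost _; rewrite leq_mul2r; apply/orP; right.
by move: lb; rewrite /h /= !expnS; lia.
Qed.

Section Link.
Variables (V : finType) (F : {set {set V}}).

Definition link x := [set e :\ x | e in min_class F x].

Lemma card_link x : #|link x| = #|min_class F x|.
Proof.
apply: card_in_imset => e1 e2; rewrite !inE => /andP[_ /eqP/vminP[x1 _]].
by case/andP=> _ /eqP/vminP[x2 _] e12; rewrite -(setD1K x1) e12 setD1K.
Qed.

Lemma mem_link e x : e \in F -> vmin e = Some x -> e :\ x \in link x.
Proof. by move=> eF ex; apply: imset_f; rewrite inE eF ex eqxx. Qed.

Lemma link_uniform k x : uniform F k.+1 -> uniform (link x) k.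
Proof.
move=> Fk _e /imsetP[e]; rewrite inE => /andP[eF /eqP/vminP[xe _]] ->.
by have := cardsD1 x e; rewrite xe (Fk e eF); lia.
Qed.

End Link.

Lemma uniform_gt_tree (V : finType) (k : nat) (F : {set {set V}}) :
  uniform F k -> exists t : gt_tree V, forall e, e \in F ->
    gt_output t e = e /\ 2 ^ gt_ntests t e <= #|F| * 8 ^ k.
Proof.
elim: k F => [|k IH] F Fk.
  exists (GTLeaf set0) => e eF; split; first by apply/esym/eqP; rewrite -cards_eq0 Fk.
  by rewrite muln1; apply/card_gt0P; exists e.
have [Tl Tl_spec] := fin_all_exists (fun x => IH (link F x) (link_uniform (x := x) Fk)).
have [s s_spec] := min_vertex_search F (fun x => gt_add x (Tl x)).
exists s => e eF.
have [x ex] : exists x, vmin e = Some x by apply: vmin_exists; rewrite -cards_eq0 Fk.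
have [xe _] := vminP ex.
have [-> cost_s] := s_spec e x eF ex.
have [out_l cost_l] := Tl_spec x (e :\ x) (mem_link eF ex).
split; first by rewrite gt_output_add out_l setD1K.
rewrite gt_ntests_add in cost_s; rewrite card_link in cost_l.
have w0 : 0 < #|min_class F x| by apply/card_gt0P; exists e; rewrite inE eF ex eqxx.
rewrite -(leq_pmul2r w0); apply: (leq_trans cost_s); rewrite expnS; nia.
Qed.

Lemma INR_expn (a n : nat) : INR (a ^ n) = (INR a ^ n)%R.
Proof. by elim: n => [|n IH]; rewrite ?expn0 // expnS mult_INR IH. Qed.

Lemma ln2_gt0 : (0 < ln 2)%R.
Proof. by apply: (Rlt_trans _ (/ 2)); [lra | exact: ln_lt_2]. Qed.

Lemma log2_expn2 n : log2 (INR (2 ^ n)) = INR n.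
Proof.
rewrite /log2 INR_expn ln_pow; last by simpl; lra.
have -> : INR 2 = 2%R by simpl; lra.
by field; apply: Rgt_not_eq; exact: ln2_gt0.
Qed.

Lemma log2_mult x y : (0 < x)%R -> (0 < y)%R -> log2 (x * y) = (log2 x + log2 y)%R.
Proof. by move=> x0 y0; rewrite /log2 ln_mult // /Rdiv Rmult_plus_distr_r. Qed.

Lemma log2_le x y : (0 < x)%R -> (x <= y)%R -> (log2 x <= log2 y)%R.
Proof.
move=> x0 xy; apply: Rmult_le_compat_r; first exact/Rlt_le/Rinv_0_lt_compat/ln2_gt0.
by case: xy => [xy|<-]; [exact/Rlt_le/ln_increasing | exact: Rle_refl].
Qed.

Lemma log2_bound n a k : (0 < a)%N -> (2 ^ n <= a * 8 ^ k)%N ->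
  (INR n <= log2 (INR a) + 3 * INR k)%R.
Proof.
move=> a0 le_n; have a0' : (0 < INR a)%R by apply/lt_0_INR/ltP.
have -> : (3 * INR k = INR (3 * k))%R by rewrite mult_INR; congr (_ * _)%R; simpl; lra.
rewrite -log2_expn2 -(log2_expn2 (3 * k)) -log2_mult; last first.
- by rewrite INR_expn; apply: pow_lt; simpl; lra.
- by [].
apply: log2_le; first by rewrite INR_expn; apply: pow_lt; simpl; lra.
by rewrite -mult_INR expnM; apply/le_INR/leP.
Qed.

Theorem theorem1 :
  exists C : R, (0 < C)%R /\
  forall (d : nat) (V : finType) (E : {set {set V}}),
    (1 <= d)%N -> uniform E d -> (1 <= #|E|)%N ->
    exists t : gt_tree V,
      forall e, e \in E ->
        gt_output t e = e /\
        (INR (gt_ntests t e) <=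
           log2 (INR #|E|) + 2 * sqrt (INR d * log2 (INR #|E|)) + C * INR d)%R.
Proof.
exists 3%R; split; first lra.
move=> d V E _ Ed E0; have [t t_spec] := uniform_gt_tree Ed.
exists t => e eE; have [-> cost] := t_spec e eE; split=> //.
have := log2_bound E0 cost; have := sqrt_pos (INR d * log2 (INR #|E|)); lra.
Qed.
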